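(* Let $q$ be a prime power and let $n_1,n_2$ be coprime odd positive integers, each coprime to $q$. If $x-1$ is the only SCRIM factor of $x^{n_1}-1$ and the only SCRIM factor of $x^{n_2}-1$ in $\mathbb{F}_{q^2}[x]$, then $x-1$ is the only SCRIM factor of $x^{n_1n_2}-1$ in $\mathbb{F}_{q^2}[x]$.
   Context: $\mathbb{F}_{q^2}$ is the finite field with $q^2$ elements. For $\alpha\in\mathbb{F}_{q^2}$ put $\bar\alpha=\alpha^q$, and for $f(x)=\sum_i f_ix^i$ put $\overline{f(x)}=\sum_i \bar f_i x^i$. For $f(x)$ with $f(0)\neq 0$, $f^*(x)=x^{\deg f}f(0)^{-1}f(1/x)$ and $f^\dagger(x)=\overline{f^*(x)}$. A polynomial is SCRIM if it is monic, irreducible over $\mathbb{F}_{q^2}$, has nonzero constant term, and satisfies $f=f^\dagger$. A SCRIM factor of $x^n-1$ is a SCRIM polynomial dividing $x^n-1$ in $\mathbb{F}_{q^2}[x]$. *)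

From HB Require Import structures.
From mathcomp Require Import all_boot all_order all_algebra all_field.
Set Implicit Arguments. Unset Strict Implicit. Unset Printing Implicit Defensive.
Import GRing.Theory.
Local Open Scope ring_scope.

Section Scrim.
Variables (F : finFieldType) (q : nat).

Definition conj_poly (f : {poly F}) : {poly F} := map_poly (fun a => a ^+ q) f.

(* f^*(x) = x^{deg f} f(0)^{-1} f(1/x): reversed coefficient sequence, scaled *)
Definition recip_poly (f : {poly F}) : {poly F} :=
  (f`_0)^-1 *: Poly (rev (polyseq f)).

Definition dagger_poly (f : {poly F}) : {poly F} := conj_poly (recip_poly f).

Definition SCRIM (f : {poly F}) : Prop :=
  [/\ f \is monic, irreducible_poly f, f`_0 != 0 & f = dagger_poly f].

Definition SCRIM_factor (n : nat) (f : {poly F}) : Prop :=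
  SCRIM f /\ f %| 'X^n - 1.

Definition only_trivial_SCRIM_factor (n : nat) : Prop :=
  SCRIM_factor n ('X - 1) /\ forall f, SCRIM_factor n f -> f = 'X - 1.

End Scrim.

(* Let f be a SCRIM factor of x^(n1 n2) - 1 and a a root of f, e.g. the class of x in
   F[x]/(f).  As f = f^dagger, a^(-q) is also a root of f.  For any m, let g be the
   minimal polynomial of b = a^m over F.  Since g(x^m) vanishes at a, it vanishes at
   a^(-q), so b^(-q) is a root of g and b^(q^2) one of g^dagger; the coefficients of
   g^dagger lie in F = F_(q^2), so b is a root of g^dagger too.  Hence g divides g^dagger,
   and the two are equal, being monic of the same degree.  For m = n2, b is an n1-th root
   of unity, so g is a SCRIM factor of x^n1 - 1, i.e. g = x - 1 and a^n2 = 1.  Likewise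
   a^n1 = 1, so a = 1 by coprimality and f = x - 1. *)

From HB Require Import structures.
From mathcomp Require Import all_boot all_order all_algebra all_field.
From Stdlib Require Import Classical.

Set Implicit Arguments.
Unset Strict Implicit.
Unset Printing Implicit Defensive.

Import GRing.Theory Pdiv.Field.
Local Open Scope ring_scope.

Section EmbeddedRoots.
Variables (F L : fieldType) (iota : {rmorphism F -> L}).
Local Notation "p ^iota" := (map_poly iota p) (format "p ^iota").

Lemma irredp_dvdp_annihilator (f r : {poly F}) (z : L) :
  irreducible_poly f -> root f^iota z -> root r^iota z -> f %| r.
Proof.
move=> [f_gt1 irr_f] fz rz.
have nz_f : f != 0 by rewrite -size_poly_gt0 ltnW.
have nz_gcd : gcdp f r != 0 by rewrite gcdp_eq0 negb_and nz_f.
have : gcdp f r %= f.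
  apply: irr_f (dvdp_gcdl f r); rewrite -(size_map_poly iota) gtn_eqF //.
  by rewrite (@root_size_gt1 _ z) ?map_poly_eq0 // gcdp_map root_gcd fz.
by move/eqp_dvdl <-; apply: dvdp_gcdr.
Qed.

Lemma root_dvdp_map (f r : {poly F}) (z : L) :
  f %| r -> root f^iota z -> root r^iota z.
Proof. by rewrite -(dvdp_map iota); apply: root_dvdp. Qed.

Lemma exists_min_size_annihilator (p : {poly F}) (z : L) :
  p != 0 -> root p^iota z ->
  exists2 g : {poly F}, (g != 0) && root g^iota z &
    forall r, root r^iota z -> r != 0 -> (size g <= size r)%N.
Proof.
elim: {p}(size p) {-2}p (leqnn (size p)) => [|n IHn] p le_p_n nz_p pz.
  by move: le_p_n; rewrite leqn0 size_poly_eq0 (negPf nz_p).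
have [[r /andP[nz_r rz] lt_r_p] | no_smaller] :=
  classic (exists2 r : {poly F}, (r != 0) && root r^iota z & (size r < size p)%N).
  by apply: (IHn r) => //; rewrite -ltnS (leq_trans lt_r_p).
exists p; first by rewrite nz_p pz.
move=> r rz nz_r; rewrite leqNgt; apply/negP => lt_r_p.
by apply: no_smaller; exists r; rewrite ?nz_r.
Qed.

Lemma exists_minpoly (p : {poly F}) (z : L) :
  p != 0 -> root p^iota z ->
  exists g : {poly F}, [/\ g \is monic, irreducible_poly g & root g^iota z].
Proof.
move=> nz_p pz; have [g /andP[nz_g gz] min_g] := exists_min_size_annihilator nz_p pz.
have nz_c : (lead_coef g)^-1 != 0 by rewrite invr_eq0 lead_coef_eq0.
exists ((lead_coef g)^-1 *: g); split.
- by rewrite monicE lead_coefZ mulVf ?lead_coef_eq0.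
- have gz' : root ((lead_coef g)^-1 *: g)^iota z.
    by rewrite map_polyZ rootZ ?fmorph_eq0.
  apply/(subfx_irreducibleP gz'); first by rewrite scaler_eq0 negb_or nz_c.
  by move=> r rz nz_r; rewrite size_scale //; apply: min_g.
- by rewrite map_polyZ rootZ ?fmorph_eq0.
Qed.

Lemma root_Poly_rev (p : {poly F}) (z : L) :
  z != 0 -> root p^iota z -> root (Poly (rev p))^iota z^-1.
Proof.
move=> nz_z pz; have nz_zn := expf_neq0 (size p).-1 nz_z.
apply/eqP/(mulIf nz_zn); rewrite mul0r -(rootP pz).
rewrite (@horner_coef_wide _ (size p)); last first.
  by rewrite size_map_poly -(size_rev p) size_Poly.
rewrite horner_coef mulr_suml size_map_poly.
rewrite [RHS](reindex_inj rev_ord_inj) /=.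
apply: eq_bigr => i _; rewrite !coef_map coef_Poly nth_rev // -mulrA.
congr (_ * _); rewrite -{2}(subnKC (valP i)) addSn addnC exprD exprVn mulrC.
by rewrite mulfK // expf_neq0.
Qed.

Lemma horner_map_pchar_exp (m : nat) (h : {poly F}) (z : L) :
  [pchar F].-nat m ->
  (h^iota).[z] ^+ m = (map_poly (fun c => c ^+ m) h)^iota.[z ^+ m].
Proof.
move=> pFm; have pLm : [pchar L].-nat m by rewrite (eq_pnat _ (fmorph_pchar iota)).
have c0 : 0 ^+ m = 0 :> F by rewrite expr0n gtn_eqF //; case/andP: pFm.
rewrite horner_coef (@horner_coef_wide _ (size h)); last first.
  by rewrite size_map_poly; apply: size_poly.
rewrite size_map_poly (big_morph _ (fun x y => exprDn_pchar x y pLm) (expr0n _ m)).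
rewrite gtn_eqF /=; last by case/andP: pFm.
apply: eq_bigr => i _.
by rewrite !coef_map /= coef_map_id0 // exprMn rmorphXn exprAC.
Qed.

Lemma root_map_neq0 (p : {poly F}) (z : L) : p`_0 != 0 -> root p^iota z -> z != 0.
Proof.
move=> p0 pz; apply: contraTneq pz => ->.
by rewrite /root horner_coef0 coef_map fmorph_eq0.
Qed.

End EmbeddedRoots.

Section Dagger.
Variables (F : finFieldType) (L : fieldType) (iota : {rmorphism F -> L}).
Local Notation "p ^iota" := (map_poly iota p) (format "p ^iota").

Lemma root_expr_card (h : {poly F}) (z : L) :
  [pchar F].-nat #|F| -> root h^iota (z ^+ #|F|) -> root h^iota z.
Proof.
move=> pF hz; have /eqP := horner_map_pchar_exp iota h z pF.
have -> : map_poly (fun c => c ^+ #|F|) h = h.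
  by apply/polyP => i; rewrite coef_map_id0 ?expf_card // expr0n gtn_eqF.
by rewrite (rootP hz) expf_eq0 => /andP[].
Qed.

Variable q : nat.
Hypothesis pchar_q : [pchar F].-nat q.

Let q_gt0 : (0 < q)%N. Proof. by case/andP: pchar_q. Qed.

Lemma polyseq_Poly_rev (f : {poly F}) : f`_0 != 0 -> Poly (rev f) = rev f :> seq F.
Proof.
move=> f0; apply: (@PolyK _ 0).
by case: (polyseq f) f0 => [|c s] //; rewrite rev_cons last_rcons.
Qed.

Lemma recip_poly_monic (f : {poly F}) : f`_0 != 0 -> recip_poly f \is monic.
Proof.
move=> f0; rewrite monicE /recip_poly lead_coefZ /lead_coef polyseq_Poly_rev //.
have nz_f : (0 < size f)%N.
  by rewrite size_poly_gt0; apply: contraNneq f0 => ->; rewrite coef0.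
by rewrite size_rev nth_rev ?prednK ?ltn_predL // subnn mulVf.
Qed.

Lemma size_recip_poly (f : {poly F}) : f`_0 != 0 -> size (recip_poly f) = size f.
Proof.
move=> f0; rewrite /recip_poly size_scale ?invr_eq0 //.
by rewrite polyseq_Poly_rev ?size_rev.
Qed.

Lemma dagger_poly_monic (f : {poly F}) : f`_0 != 0 -> dagger_poly q f \is monic.
Proof.
move=> /recip_poly_monic r1; rewrite monicE /dagger_poly /conj_poly.
by rewrite lead_coef_map_id0 ?(eqP r1) ?expr1n ?oner_neq0 ?expr0n ?gtn_eqF.
Qed.

Lemma size_dagger_poly (f : {poly F}) : f`_0 != 0 -> size (dagger_poly q f) = size f.
Proof.
move=> f0; have r1 := recip_poly_monic f0; rewrite -(size_recip_poly f0).
by rewrite /dagger_poly /conj_poly size_map_poly_id0 ?(eqP r1) ?expr1n ?oner_neq0.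
Qed.

Lemma root_dagger_poly (h : {poly F}) (z : L) :
  z != 0 -> root h^iota z -> root (dagger_poly q h)^iota ((z^-1) ^+ q).
Proof.
move=> nz_z hz; have /rootP rz := root_Poly_rev nz_z hz.
rewrite /root /dagger_poly /conj_poly -horner_map_pchar_exp //.
by rewrite /recip_poly map_polyZ hornerZ rz mulr0 expr0n gtn_eqF.
Qed.

End Dagger.

Section ScrimRoots.
Variables (F : finFieldType) (q : nat).
Hypotheses (pchar_q : [pchar F].-nat q) (cardF : #|F| = (q ^ 2)%N).
Variables (L : fieldType) (iota : {rmorphism F -> L}).
Local Notation "p ^iota" := (map_poly iota p) (format "p ^iota").

Lemma dvdp_dagger_poly_eq (g : {poly F}) :
  g \is monic -> g`_0 != 0 -> g %| dagger_poly q g -> g = dagger_poly q g.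
Proof.
move=> mon_g g0 g_dvd; apply/eqP.
by rewrite -eqp_monic ?dagger_poly_monic // -dvdp_size_eqp // size_dagger_poly.
Qed.

Lemma minpoly_expr_dvdp_dagger (f g : {poly F}) (a : L) (m : nat) :
  SCRIM q f -> root f^iota a -> irreducible_poly g -> root g^iota (a ^+ m) ->
  g %| dagger_poly q g.
Proof.
move=> [_ irr_f f0 fE] fa irr_g gb.
have nz_a := root_map_neq0 f0 fa; set b := a ^+ m.
have nz_b : b != 0 by rewrite expf_neq0.
have f_dvd : f %| g \Po 'X^m.
  apply: irredp_dvdp_annihilator irr_f fa _.
  by rewrite map_comp_poly map_polyXn /root horner_comp hornerXn.
have gb' : root g^iota ((b^-1) ^+ q).
  have fa' : root f^iota ((a^-1) ^+ q) by rewrite fE; apply: root_dagger_poly.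
  have := root_dvdp_map f_dvd fa'.
  by rewrite map_comp_poly map_polyXn /root horner_comp hornerXn /b !exprVn -!exprM mulnC.
have nz_b' : (b^-1) ^+ q != 0 by rewrite expf_neq0 ?invr_eq0.
have := root_dagger_poly pchar_q nz_b' gb'.
rewrite -exprVn invrK -exprM mulnn -cardF => /root_expr_card dgb.
apply: irredp_dvdp_annihilator irr_g gb (dgb _).
by rewrite cardF pnatX pchar_q.
Qed.

Lemma SCRIM_root_expr_eq1 (f : {poly F}) (a : L) (n m : nat) :
  SCRIM q f -> root f^iota a -> (0 < n)%N -> only_trivial_SCRIM_factor F q n ->
  a ^+ (n * m) = 1 -> a ^+ m = 1.
Proof.
move=> Sf fa n_gt0 [_ only_triv] a_nm.
have nz_P : 'X^n - 1 != 0 :> {poly F} by rewrite monic_neq0 ?monicXnsubC.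
have Pb : root ('X^n - 1)^iota (a ^+ m).
  by rewrite rmorphB rmorph1 /= map_polyXn /root !hornerE -exprM mulnC a_nm subrr.
have [g [mon_g irr_g gb]] := exists_minpoly nz_P Pb.
have g_dvd : g %| 'X^n - 1 := irredp_dvdp_annihilator irr_g gb Pb.
have g0 : g`_0 != 0.
  have : ~~ root ('X^n - 1 : {poly F}) 0.
    by rewrite /root !hornerE expr0n gtn_eqF // sub0r oppr_eq0 oner_eq0.
  apply: contraNneq => g0; apply: root_dvdp g_dvd _.
  by rewrite /root horner_coef0 g0.
have gE := dvdp_dagger_poly_eq mon_g g0 (minpoly_expr_dvdp_dagger Sf fa irr_g gb).
move: gb; rewrite (only_triv g); last by split; first split.
by rewrite rmorphB rmorph1 /= map_polyX /root !hornerE subr_eq0 => /eqP.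
Qed.

End ScrimRoots.

Lemma pchar_pnat_of_card (F : finFieldType) (p k m : nat) :
  prime p -> #|F| = ((p ^ k) ^ m)%N -> [pchar F].-nat (p ^ k)%N.
Proof.
move=> p_pr cardF; have pF : p \in [pchar F].
  by apply: (card_finPcharP (n := k * m)); rewrite // cardF -expnM.
by rewrite (eq_pnat _ (pcharf_eq pF)) pnatX pnat_id.
Qed.

Lemma expr_coprime_eq1 (R : ringType) (x : R) (m n : nat) :
  (0 < m)%N -> coprime m n -> x ^+ m = 1 -> x ^+ n = 1 -> x = 1.
Proof.
move=> m_gt0 co_mn xm xn; have [u _] := Bezoutl n m_gt0.
rewrite (eqP co_mn) => /dvdnP[c Ec].
have : x ^+ (1 + u * n) = 1 by rewrite Ec mulnC exprM xm expr1n.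
by rewrite exprD mulnC exprM xn expr1n mulr1.
Qed.

Lemma root_qpolyX (F : fieldType) (f : {poly F}) (mi : monic_irreducible_poly f) :
  root (map_poly (qpolyC f) f) ('qX : {poly %/ f with mi}).
Proof.
rewrite /root -in_qpoly_comp_horner comp_polyXr; apply/eqP/val_inj => /=.
by rewrite (mk_monicE mi) Pdiv.RingMonic.rmodpp ?mi.2.
Qed.

Unset Implicit Arguments.

Theorem theorem2p9 (F : finFieldType) (q : nat)
  (hq : exists p k : nat, [/\ prime p, (0 < k)%N & q = (p ^ k)%N])
  (hF : #|F| = (q ^ 2)%N)
  (n1 n2 : nat)
  (hn1 : (0 < n1)%N) (hn2 : (0 < n2)%N)
  (hodd1 : odd n1) (hodd2 : odd n2)
  (hcop : coprime n1 n2) (hq1 : coprime n1 q) (hq2 : coprime n2 q)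
  (h1 : only_trivial_SCRIM_factor F q n1)
  (h2 : only_trivial_SCRIM_factor F q n2) :
  only_trivial_SCRIM_factor F q (n1 * n2).
Proof.
have pchar_q : [pchar F].-nat q.
  have [p [k [p_pr _ qE]]] := hq; rewrite qE.
  by apply: (pchar_pnat_of_card (m := 2) p_pr); rewrite -qE.
split.
  split; first exact: h1.1.1.
  by rewrite -polyC1 dvdp_XsubCl /root !hornerE expr1n subrr.
move=> f [Sf f_dvd]; have [mon_f irr_f _ _] := Sf.
pose mi : monic_irreducible_poly f := (irr_f, mon_f).
pose iota : {rmorphism F -> {poly %/ f with mi}} := qpolyC f.
have fa : root (map_poly iota f) 'qX := root_qpolyX mi.
have a_n1n2 : 'qX ^+ (n1 * n2) = 1 :> {poly %/ f with mi}.
  move: (root_dvdp_map f_dvd fa).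
  by rewrite rmorphB rmorph1 /= map_polyXn /root !hornerE subr_eq0 => /eqP.
have a_n1 : 'qX ^+ n1 = 1 :> {poly %/ f with mi}.
  by apply: (SCRIM_root_expr_eq1 pchar_q hF Sf fa hn2 h2); rewrite mulnC.
have a_n2 := SCRIM_root_expr_eq1 pchar_q hF Sf fa hn1 h1 a_n1n2.
have f1 : root f 1.
  move: fa; rewrite (expr_coprime_eq1 hn1 hcop a_n1 a_n2) -(rmorph1 iota).
  by rewrite /root horner_map fmorph_eq0.
apply/eqP; rewrite -eqp_monic ?monicXsubC //.
by rewrite eqp_sym (irr_f.2 ('X - 1)) ?size_XsubC // dvdp_XsubCl.
Qed.
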